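(* Let $R$ be a commutative Noetherian ring of prime characteristic $p$, let $b\in\mathbb{N}$, let $W=\bigoplus_{n\geq b}W_n$ be a $\mathbb{Z}$-graded left $R[x,f]$-module (with $W_n=0$ for $n<b$), and let $M$ be an $R$-module generated by the finite set $\{m_1,\ldots,m_t\}$. Suppose given a homogeneous (degree $0$) $R[x,f]$-homomorphism $\lambda'=\bigoplus_{i\geq b}\lambda_i:\bigoplus_{i\geq b}(Rx^i\otimes_RM)\to W$. For $j=1,\ldots,t$ let $g_j:=\lambda_b(x^b\otimes m_j)\in W_b$, and let $K:=\{(r_1,\ldots,r_t)\in R^t:\sum_{j=1}^t r_jg_j=0\}$. Then for each $i=0,1,\ldots,b-1$ there is an $R$-homomorphism $\lambda_i:Rx^i\otimes_RM\to R^t/f^{-(b-i)}(K)$ with $\lambda_i\left(\sum_{j=1}^t r_jx^i\otimes m_j\right)=(r_1,\ldots,r_t)+f^{-(b-i)}(K)$ for all $r_1,\ldots,r_t\in R$; and $\lambda:=\bigoplus_{i\in\mathbb{N}_0}\lambda_i:R[x,f]\otimes_RM=\bigoplus_{i\in\mathbb{N}_0}(Rx^i\otimes_RM)\to\operatorname{ext}(W;g_1,\ldots,g_t;b)$ is a homogeneous $R[x,f]$-homomorphism extending $\lambda'$.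
   Context: $R[x,f]$ denotes the Frobenius skew polynomial ring over $R$: as a left $R$-module it is free on $(x^i)_{i\in\mathbb{N}_0}$, with multiplication subject to $xr = r^px$; it is graded with $n$th component $Rx^n$, regarded as an $(R,R)$-bimodule (so $rx^i\cdot s=rs^{p^i}x^i$). $R[x,f]\otimes_RM=\bigoplus_{i}(Rx^i\otimes_RM)$ is a graded left $R[x,f]$-module. $f:R^t\to R^t$ is the Frobenius map $(r_1,\ldots,r_t)\mapsto(r_1^p,\ldots,r_t^p)$, and $f^{-j}(K)=\{v\in R^t: f^j(v)\in K\}$. The $b$-place extension $\operatorname{ext}(W;g_1,\ldots,g_t;b)$ is the graded left $R[x,f]$-module whose component in degree $b-j$ is $R^t/f^{-j}(K)$ for $j=1,\ldots,b$ and whose component in degree $n\ge b$ is $W_n$, which contains $W$ as an $R[x,f]$-submodule, and in which $x(v+f^{-j}(K))=f(v)+f^{-(j-1)}(K)$ for $v\in R^t$ and $2\le j\le b$, and $x((r_1,\ldots,r_t)+f^{-1}(K))=\sum_{i=1}^t r_i^pg_i$. *)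

From HB Require Import structures.
From mathcomp Require Import all_boot all_order all_algebra.
Set Implicit Arguments. Unset Strict Implicit. Unset Printing Implicit Defensive.
Import GRing.Theory.
Local Open Scope ring_scope.

Definition is_ideal (R : comNzRingType) (I : R -> Prop) : Prop :=
  [/\ I 0, (forall a b, I a -> I b -> I (a + b)) & (forall r a, I a -> I (r * a))].

Definition noetherian (R : comNzRingType) : Prop :=
  forall I : nat -> R -> Prop, (forall n, is_ideal (I n)) ->
  (forall n a, I n a -> I n.+1 a) ->
  exists N, forall n a, (N <= n)%N -> I n a -> I N a.

Definition is_additive (U V : zmodType) (f : U -> V) : Prop :=
  forall u v, f (u + v) = f u + f v.

Definition rlinear (R : comNzRingType) (U V : lmodType R) (f : U -> V) : Prop :=
  forall a u v, f (a *: u + v) = a *: f u + f v.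

Definition frob_semilinear (R : comNzRingType) (p e : nat) (U V : lmodType R)
  (f : U -> V) : Prop :=
  is_additive f /\ forall s u, f (s *: u) = s ^+ (p ^ e)%N *: f u.

Definition frobv (R : comNzRingType) (p e t : nat) (v : 'rV[R]_t) : 'rV[R]_t :=
  \row_k (v 0 k) ^+ (p ^ e)%N.

(* (T, iota) is the tensor product  R x^e (x)_R M, iota m = x^e (x) m,
   characterised by its universal property: R-linear maps out of it correspond
   to additive maps phi : M -> X with phi (s m) = s^(p^e) phi m. *)
Definition is_frob_tensor (R : comNzRingType) (p e : nat) (M T : lmodType R)
  (iota : M -> T) : Prop :=
  frob_semilinear p e iota /\
  forall (X : lmodType R) (phi : M -> X), frob_semilinear p e phi ->
  exists psi : T -> X,
    [/\ rlinear psi, (forall m, psi (iota m) = phi m) &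
        forall psi' : T -> X, rlinear psi' -> (forall m, psi' (iota m) = phi m) ->
          forall u, psi' u = psi u].

(* A (N_0-indexed) graded left R[x,f]-module: R-modules W n with the action
   of x given by maps W n -> W n.+1 satisfying x (r w) = r^p x w. *)
Definition graded_Rxf_module (R : comNzRingType) (p : nat) (W : nat -> lmodType R)
  (xW : forall n, W n -> W n.+1) : Prop :=
  forall n, frob_semilinear p 1 (xW n).

(* (T, xT, iota) is the graded R[x,f]-module R[x,f] (x)_R M, with
   T n = R x^n (x)_R M, iota n m = x^n (x) m, and x (r x^n (x) m) = r^p x^(n+1) (x) m. *)
Definition Rxf_tensor_model (R : comNzRingType) (p : nat) (M : lmodType R)
  (T : nat -> lmodType R) (iota : forall n, M -> T n)
  (xT : forall n, T n -> T n.+1) : Prop :=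
  [/\ forall n, is_frob_tensor p n (iota n),
      graded_Rxf_module p xT &
      forall n r m, xT n (r *: iota n m) = r ^+ p *: iota n.+1 m].

(* (E, xE) is the b-place extension ext(W; g_1..g_t; b):
   for n < b, E n = R^t / f^{-(b-n)}(K) via the surjection pi n with that kernel,
   where K = {r | sum r_j g_j = 0};
   for n >= b, E n = W n via the isomorphism emb n (W is a submodule);
   x acts as in the definition of ext. *)
Definition is_ext_model (R : comNzRingType) (p b t : nat) (W : nat -> lmodType R)
  (xW : forall n, W n -> W n.+1) (g : 'I_t -> W b)
  (E : nat -> lmodType R) (xE : forall n, E n -> E n.+1)
  (pi : forall n, 'rV[R]_t -> E n) (emb : forall n, W n -> E n) : Prop :=
  let K := fun v : 'rV[R]_t => \sum_(k < t) v 0 k *: g k = 0 in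
  graded_Rxf_module p xE /\
  [/\ (forall n, (n < b)%N ->
         [/\ rlinear (pi n), (forall e, exists v, pi n v = e) &
             forall v, pi n v = 0 <-> K (frobv p (b - n) v)]),
      (forall n, (b <= n)%N -> rlinear (emb n) /\ bijective (emb n)),
      (forall n w, (b <= n)%N -> xE n (emb n w) = emb n.+1 (xW n w)),
      (forall n v, (n.+1 < b)%N -> xE n (pi n v) = pi n.+1 (frobv p 1 v)) &
      match b return ('I_t -> W b) -> Prop with
      | 0 => fun _ => True
      | b'.+1 => fun g => forall v,
          xE b' (pi b' v) = emb b'.+1 (\sum_(k < t) (v 0 k) ^+ p *: g k)
      end g].

From HB Require Import structures.
From mathcomp Require Import all_boot all_order all_algebra.
From Stdlib Require Import ClassicalEpsilon.
Import GRing.Theory.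
Local Open Scope ring_scope.

Set Implicit Arguments.
Unset Strict Implicit.
Unset Printing Implicit Defensive.

(* For [i < b] the generator [x^i (x) u], with [u = sum_j c_j m_j], must go to the
   class of [f^i(c)] in [R^t / f^{-(b-i)}(K)]; this only depends on [u] because
   [sum_j c_j^(p^b) g_j = lam'_b (x^b (x) u)], which vanishes with [u].  By the
   universal property of [R x^i (x)_R M] this assignment extends to an [R]-linear
   [lam_i].  Both sides of [lam_(i+1) (x v) = x (lam_i v)] are Frobenius-semilinear
   in [v], so it suffices to check it on generators, which is a computation with
   [f^(i+1) = f o f^i]; at [i + 1 = b] it is the defining action of [x] on the last
   quotient of [ext(W; g; b)]. *)

Section FrobeniusTwist.
Variables (R : comNzRingType) (p : nat) (chRp : p \in [pchar R]) (V : lmodType R).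

(* [V] with [r] acting as [r ^+ p]; the proof [chRp] only indexes the instance, whose
   distributivity over sums of scalars needs characteristic [p]. *)
Definition frob_twist (_ : p \in [pchar R]) : Type := V.
HB.instance Definition _ := GRing.Zmodule.on (frob_twist chRp).

Definition frob_twist_scale (r : R) (v : frob_twist chRp) : frob_twist chRp :=
  r ^+ p *: (v : V).

Lemma frob_twist_scaleA a c v :
  frob_twist_scale a (frob_twist_scale c v) = frob_twist_scale (a * c) v.
Proof. by rewrite /frob_twist_scale scalerA exprMn. Qed.

Lemma frob_twist_scale1 : left_id 1 frob_twist_scale.
Proof. by move=> v; rewrite /frob_twist_scale expr1n scale1r. Qed.

Lemma frob_twist_scaleDr : right_distributive frob_twist_scale +%R.
Proof. by move=> a u v; rewrite /frob_twist_scale scalerDr. Qed.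

Lemma frob_twist_scaleDl v : {morph frob_twist_scale^~ v : a c / a + c}.
Proof.
move=> a c; rewrite /frob_twist_scale exprDn_pchar ?scalerDl //.
by rewrite pnatE ?(pcharf_prime chRp).
Qed.

HB.instance Definition _ := GRing.Zmodule_isLmodule.Build R (frob_twist chRp)
  frob_twist_scaleA frob_twist_scale1 frob_twist_scaleDr frob_twist_scaleDl.

End FrobeniusTwist.

Section LinearMaps.
Variables (R : comNzRingType) (p e : nat).
Implicit Types U V X : lmodType R.

Lemma rlinearD U V (f : U -> V) : rlinear f -> forall u v, f (u + v) = f u + f v.
Proof. by move=> f_lin u v; have := f_lin 1 u v; rewrite !scale1r. Qed.

Lemma rlinear0 U V (f : U -> V) : rlinear f -> f 0 = 0.
Proof. by move=> f_lin; apply: (addrI (f 0)); rewrite -rlinearD // !addr0. Qed.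

Lemma rlinearZ U V (f : U -> V) : rlinear f -> forall a u, f (a *: u) = a *: f u.
Proof. by move=> f_lin a u; have := f_lin a u 0; rewrite (rlinear0 f_lin) !addr0. Qed.

Lemma rlinear_sum U V (f : U -> V) t (r : 'I_t -> R) (u : 'I_t -> U) :
  rlinear f -> f (\sum_(j < t) r j *: u j) = \sum_(j < t) r j *: f (u j).
Proof.
move=> f_lin; apply: (big_ind2 (fun x y => f x = y)); first exact: rlinear0.
  by move=> x1 x2 y1 y2 <- <-; rewrite rlinearD.
by move=> j _; rewrite rlinearZ.
Qed.

Lemma frob_semilinear0 U V (f : U -> V) : frob_semilinear p e f -> f 0 = 0.
Proof. by case=> f_add _; apply: (addrI (f 0)); rewrite -f_add !addr0. Qed.

Lemma frob_semilinear_sum U V (f : U -> V) t (r : 'I_t -> R) (u : 'I_t -> U) :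
  frob_semilinear p e f ->
  f (\sum_(j < t) r j *: u j) = \sum_(j < t) r j ^+ (p ^ e)%N *: f (u j).
Proof.
move=> f_semi; apply: (big_ind2 (fun x y => f x = y)).
- exact: frob_semilinear0 f_semi.
- by move=> x1 x2 y1 y2 <- <-; rewrite f_semi.1.
- by move=> j _; rewrite f_semi.2.
Qed.

Lemma frob_semilinear_compl U V X (f : U -> V) (g : V -> X) :
  rlinear g -> frob_semilinear p e f -> frob_semilinear p e (g \o f).
Proof.
move=> g_lin [f_add f_scale]; split=> [u v | s u] /=.
  by rewrite f_add rlinearD.
by rewrite f_scale rlinearZ.
Qed.

Lemma frob_semilinear_compr U V X (f : U -> V) (g : V -> X) :
  rlinear f -> frob_semilinear p e g -> frob_semilinear p e (g \o f).
Proof.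
move=> f_lin [g_add g_scale]; split=> [u v | s u] /=.
  by rewrite rlinearD // g_add.
by rewrite rlinearZ // g_scale.
Qed.

End LinearMaps.

Section FrobeniusTensor.
Variables (R : comNzRingType) (p e : nat) (chRp : p \in [pchar R]).
Variables (M T : lmodType R) (iota : M -> T).
Hypothesis iota_tensor : is_frob_tensor p e iota.

(* In [frob_twist V] the maps [f] and [g] become [R]-linear, so the uniqueness part of
   the universal property applies. *)
Lemma frob_tensor_semilinear_eq (V : lmodType R) (f g : T -> V) :
  frob_semilinear p 1 f -> frob_semilinear p 1 g -> f \o iota =1 g \o iota -> f =1 g.
Proof.
move=> [f_add f_scale] [g_add g_scale] fg_iota.
have [[iota_add iota_scale] iota_univ] := iota_tensor.
pose X := frob_twist V chRp.
have f_lin : rlinear (f : T -> X) by move=> a u v; rewrite f_add f_scale expn1.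
have g_lin : rlinear (g : T -> X) by move=> a u v; rewrite g_add g_scale expn1.
have fiota_semi : frob_semilinear p e (f \o iota : M -> X).
  by split=> [u v | s u] /=; rewrite ?iota_add ?f_add // iota_scale f_scale expn1.
have [psi [_ _ psi_uniq]] := iota_univ X _ fiota_semi.
by move=> u; rewrite (psi_uniq f) // (psi_uniq g) // => v; rewrite -fg_iota.
Qed.

Definition frob_tensor_lift (X : lmodType R) (phi : M -> X) : T -> X :=
  epsilon (inhabits (fun=> 0))
    (fun psi => rlinear psi /\ forall u, psi (iota u) = phi u).

Lemma frob_tensor_liftP (X : lmodType R) (phi : M -> X) :
  frob_semilinear p e phi ->
  rlinear (frob_tensor_lift phi) /\ forall u, frob_tensor_lift phi (iota u) = phi u.
Proof.
move=> phi_semi; have [psi [psi_lin psi_iota _]] := iota_tensor.2 X phi phi_semi.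
exact: (epsilon_spec _ (fun psi => rlinear psi /\ forall u, psi (iota u) = phi u)
  (ex_intro _ psi (conj psi_lin psi_iota))).
Qed.

End FrobeniusTensor.

Section Frobv.
Variables (R : comNzRingType) (p t : nat) (chRp : p \in [pchar R]).
Implicit Types c d : 'rV[R]_t.

Lemma frobvD e c d : frobv p e (c + d) = frobv p e c + frobv p e d.
Proof.
apply/rowP => k; rewrite !mxE exprDn_pchar //.
by rewrite pnatX pnatE ?(pcharf_prime chRp) ?chRp.
Qed.

Lemma frobvZ e s c : frobv p e (s *: c) = s ^+ (p ^ e)%N *: frobv p e c.
Proof. by apply/rowP => k; rewrite !mxE exprMn. Qed.

Lemma frobv_comp e1 e2 c : frobv p e1 (frobv p e2 c) = frobv p (e2 + e1) c.
Proof. by apply/rowP => k; rewrite !mxE -exprM expnD. Qed.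

Lemma frobv_delta e (j : 'I_t) : frobv p e 'e_j = 'e_j :> 'rV[R]_t.
Proof.
apply/rowP => k; rewrite !mxE; case: (_ && _); first by rewrite expr1n.
by rewrite expr0n expn_eq0 eqn0Ngt (prime_gt0 (pcharf_prime chRp)).
Qed.

End Frobv.

Unset Implicit Arguments.

Section Extension.
Variables (R : comNzRingType) (p b t : nat) (chRp : p \in [pchar R]).
Variables (M : lmodType R) (m : 'I_t -> M).
Variable W : nat -> lmodType R.
Variables (T : nat -> lmodType R) (iota : forall n, M -> T n).
Variables (xT : forall n, T n -> T n.+1) (lam' : forall n, T n -> W n).
Variables (E : nat -> lmodType R) (xE : forall n, E n -> E n.+1).
Variables (pi : forall n, 'rV[R]_t -> E n) (emb : forall n, W n -> E n).

Hypothesis m_gen : forall u : M, exists r : 'I_t -> R, u = \sum_(j < t) r j *: m j.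
Hypothesis iota_tensor : forall n, is_frob_tensor p n (iota n).
Hypothesis xT_semi : graded_Rxf_module p xT.
Hypothesis xT_iota : forall n u, xT n (iota n u) = iota n.+1 u.
Hypothesis lam'_lin : forall n, (b <= n)%N -> rlinear (lam' n).
Hypothesis xE_semi : graded_Rxf_module p xE.
Hypothesis pi_lin : forall n, (n < b)%N -> rlinear (pi n).
Hypothesis pi_eq0 : forall n, (n < b)%N -> forall v, pi n v = 0 <->
  \sum_(k < t) frobv p (b - n) v 0 k *: lam' b (iota b (m k)) = 0.
Hypothesis emb_lin : forall n, (b <= n)%N -> rlinear (emb n).
Hypothesis emb_lam'_xT : forall n u, (b <= n)%N ->
  emb n.+1 (lam' n.+1 (xT n u)) = xE n (emb n (lam' n u)).
Hypothesis xE_pi : forall n v, (n.+1 < b)%N -> xE n (pi n v) = pi n.+1 (frobv p 1 v).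
Hypothesis xE_pi_top : forall n v, n.+1 = b ->
  xE n (pi n v) = emb n.+1 (\sum_(k < t) v 0 k ^+ p *: lam' n.+1 (iota n.+1 (m k))).

Definition coords (u : M) : 'rV[R]_t :=
  epsilon (inhabits 0) (fun c : 'rV[R]_t => u = \sum_(j < t) c 0 j *: m j).

Lemma coordsP u : u = \sum_(j < t) coords u 0 j *: m j.
Proof.
have [r u_eq] := m_gen u.
apply: (epsilon_spec _ (fun c : 'rV[R]_t => u = \sum_(j < t) c 0 j *: m j)).
exists (\row_j r j).
by rewrite u_eq; apply: eq_bigr => j _; rewrite mxE.
Qed.

Lemma lam'_iota_sum n (c : 'rV[R]_t) : (b <= n)%N ->
  lam' n (iota n (\sum_(k < t) c 0 k *: m k)) =
  \sum_(k < t) c 0 k ^+ (p ^ n)%N *: lam' n (iota n (m k)).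
Proof.
move=> bn; rewrite (frob_semilinear_sum _ _ (iota_tensor n).1).
exact: rlinear_sum (lam'_lin _ bn).
Qed.

Lemma pi_frobv_eq n (c d : 'rV[R]_t) : (n < b)%N ->
  \sum_(j < t) c 0 j *: m j = \sum_(j < t) d 0 j *: m j ->
  pi n (frobv p n c) = pi n (frobv p n d).
Proof.
move=> nb cd_eq; have -> : c = d + (c - d) by rewrite addrC subrK.
rewrite frobvD // (rlinearD (pi_lin _ nb)) -[RHS]addr0; congr (_ + _).
apply/pi_eq0 => //; rewrite frobv_comp (subnKC (ltnW nb)).
under eq_bigr do rewrite mxE.
rewrite -lam'_iota_sum //.
have -> : \sum_(k < t) (c - d) 0 k *: m k = 0.
  by under eq_bigr do rewrite !mxE scalerBl; rewrite sumrB cd_eq subrr.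
by rewrite (frob_semilinear0 (iota_tensor b).1) (rlinear0 (lam'_lin _ (leqnn b))).
Qed.

Definition gen_class n (u : M) : E n := pi n (frobv p n (coords u)).

Lemma gen_classE n (c : 'rV[R]_t) u : (n < b)%N ->
  u = \sum_(j < t) c 0 j *: m j -> gen_class n u = pi n (frobv p n c).
Proof. by move=> nb u_eq; apply: pi_frobv_eq; rewrite // -u_eq -coordsP. Qed.

Lemma gen_class_semilinear n : (n < b)%N -> frob_semilinear p n (gen_class n).
Proof.
move=> nb; split=> [u v | s u].
  rewrite (@gen_classE _ (coords u + coords v)) ?frobvD ?(rlinearD (pi_lin _ nb)) //.
  by apply/esym; under eq_bigr do rewrite mxE scalerDl; rewrite big_split -!coordsP.
rewrite (@gen_classE _ (s *: coords u)) ?frobvZ ?(rlinearZ (pi_lin _ nb)) //.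
by apply/esym; under eq_bigr do rewrite mxE -scalerA; rewrite -scaler_sumr -coordsP.
Qed.

Definition ext_hom n : T n -> E n :=
  if (n < b)%N then frob_tensor_lift (iota n) (gen_class n) else emb n \o lam' n.

Lemma ext_hom_lt n : (n < b)%N -> ext_hom n = frob_tensor_lift (iota n) (gen_class n).
Proof. by rewrite /ext_hom => ->. Qed.

Lemma ext_hom_ge n : (b <= n)%N -> ext_hom n = emb n \o lam' n.
Proof. by rewrite /ext_hom ltnNge => ->. Qed.

Lemma ext_hom_linear n : rlinear (ext_hom n).
Proof.
case: (ltnP n b) => [nb | bn].
  rewrite ext_hom_lt //.
  by case: (frob_tensor_liftP (iota_tensor n) (gen_class_semilinear _ nb)).
by rewrite ext_hom_ge // => a u v /=; rewrite (lam'_lin _ bn) (emb_lin _ bn).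
Qed.

Lemma ext_hom_iota n u : (n < b)%N -> ext_hom n (iota n u) = gen_class n u.
Proof.
move=> nb; rewrite ext_hom_lt //.
by case: (frob_tensor_liftP (iota_tensor n) (gen_class_semilinear _ nb)).
Qed.

Lemma ext_hom_sum n : (n < b)%N -> forall r : 'rV[R]_t,
  ext_hom n (\sum_(j < t) r 0 j *: iota n (m j)) = pi n r.
Proof.
move=> nb r; rewrite (rlinear_sum _ _ (ext_hom_linear n)) [in RHS](row_sum_delta r).
rewrite (rlinear_sum _ _ (pi_lin _ nb)); apply: eq_bigr => j _; congr (_ *: _).
rewrite ext_hom_iota // (@gen_classE _ 'e_j) ?frobv_delta //.
rewrite (bigD1 j) //= big1 => [|k /negbTE kj]; first by rewrite !mxE !eqxx scale1r addr0.
by rewrite mxE kj andbF scale0r.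
Qed.

Lemma xE_gen_class n u : (n < b)%N -> xE n (gen_class n u) = ext_hom n.+1 (iota n.+1 u).
Proof.
rewrite /gen_class leq_eqVlt => /orP[/eqP nb | nb].
  rewrite ext_hom_ge ?nb //= xE_pi_top // {2}(coordsP u) lam'_iota_sum ?nb //.
  by congr (emb _ _); apply: eq_bigr => k _; rewrite mxE -exprM -expnSr nb.
by rewrite xE_pi // ext_hom_iota // frobv_comp addn1.
Qed.

Lemma ext_hom_xT n u : ext_hom n.+1 (xT n u) = xE n (ext_hom n u).
Proof.
case: (ltnP n b) => [nb | bn]; last first.
  by rewrite !ext_hom_ge ?(leqW bn) //= emb_lam'_xT.
apply: (frob_tensor_semilinear_eq chRp (iota_tensor n)
  (f := ext_hom n.+1 \o xT n) (g := xE n \o ext_hom n)) => [||v] /=.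
- exact: frob_semilinear_compl (ext_hom_linear _) (xT_semi n).
- exact: frob_semilinear_compr (ext_hom_linear _) (xE_semi n).
- by rewrite xT_iota [in RHS]ext_hom_iota // xE_gen_class.
Qed.

End Extension.

Theorem proposition2p11 (R : comNzRingType) (p b t : nat)
  (M : lmodType R) (m : 'I_t -> M)
  (W : nat -> lmodType R) (xW : forall n, W n -> W n.+1)
  (T : nat -> lmodType R) (iota : forall n, M -> T n)
  (xT : forall n, T n -> T n.+1)
  (lam' : forall n, T n -> W n)
  (E : nat -> lmodType R) (xE : forall n, E n -> E n.+1)
  (pi : forall n, 'rV[R]_t -> E n) (emb : forall n, W n -> E n) :
  noetherian R ->
  p \in [pchar R] ->
  graded_Rxf_module p xW ->
  (forall n, (n < b)%N -> forall w : W n, w = 0) ->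
  (forall u : M, exists r : 'I_t -> R, u = \sum_(j < t) r j *: m j) ->
  Rxf_tensor_model p iota xT ->
  (forall n, (b <= n)%N -> rlinear (lam' n)) ->
  (forall n u, (b <= n)%N -> lam' n.+1 (xT n u) = xW n (lam' n u)) ->
  is_ext_model p xW (fun j => lam' b (iota b (m j))) xE pi emb ->
  exists lam : forall n, T n -> E n,
    [/\ forall n, rlinear (lam n),
        forall n, (n < b)%N -> forall r : 'rV[R]_t,
          lam n (\sum_(j < t) r 0 j *: iota n (m j)) = pi n r,
        forall n u, (b <= n)%N -> lam n u = emb n (lam' n u) &
        forall n u, lam n.+1 (xT n u) = xE n (lam n u)].
Proof.
move=> _ chRp _ _ m_gen [iota_tensor xT_semi xT_scale] lam'_lin lam'_xT.
move=> [xE_semi [pi_spec emb_spec xE_emb xE_pi xE_pi_b]].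
have emb_lam'_xT n u : (b <= n)%N ->
    emb n.+1 (lam' n.+1 (xT n u)) = xE n (emb n (lam' n u)).
  by move=> bn; rewrite lam'_xT ?xE_emb.
have xT_iota n u : xT n (iota n u) = iota n.+1 u.
  by have := xT_scale n 1 u; rewrite !scale1r expr1n scale1r.
have pi_lin n : (n < b)%N -> rlinear (pi n) by case/pi_spec.
have pi_eq0 n : (n < b)%N -> forall v, pi n v = 0 <->
    \sum_(k < t) frobv p (b - n) v 0 k *: lam' b (iota b (m k)) = 0.
  by case/pi_spec.
have emb_lin n : (b <= n)%N -> rlinear (emb n) by case/emb_spec.
have xE_pi_top n v : n.+1 = b ->
    xE n (pi n v) = emb n.+1 (\sum_(k < t) v 0 k ^+ p *: lam' n.+1 (iota n.+1 (m k))).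
  by move=> nb; move: xE_pi_b; rewrite -nb; apply.
exists (ext_hom _ p b _ _ m _ _ iota lam' _ pi emb); split.
- exact: ext_hom_linear.
- exact: ext_hom_sum.
- by move=> n u bn; rewrite ext_hom_ge.
- exact: ext_hom_xT.
Qed.
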